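(* Let $n\ge3$, let $i\ge 0$ be an integer with $i>(n-4)(n-1)$, and let $1\le k\le n$. Then \[|\mathcal{L}_i\cap\mathcal{B}_k|=b_{r_i+k-n-1}\qquad\text{and}\qquad |\mathcal{L}_i|=c_{r_i-1}.\]
   Context: Fix an integer $n\ge 3$. A partition is a sequence $\Lambda=(\lambda_j)_{j\ge1}$ of non-negative integers with finite support; $\mathrm{wt}(\Lambda)=\sum_j j\lambda_j$; $\mathrm{Part}(k)$ is the set of partitions with $\lambda_j=0$ for $j>k$. Write $x^\Lambda=\prod_j x_j^{\lambda_j}$, $\deg(x^\Lambda)=\sum_j\lambda_j$, and $\partial_k$ for the formal symbol of partial derivative in $x_k$. $\mathcal{B}=\{x^\Lambda\partial_k : 1\le k\le n,\ \Lambda\in\mathrm{Part}(k-1)\}$ and $\mathcal{B}_u=\{x^\Lambda\partial_k\in\mathcal{B}: k=u\}$. For an integer $i\ge-1$, let $r_i\in\{1,\dots,n-1\}$ with $i\equiv r_i\pmod{n-1}$ and $h_i=\lfloor (i-1)/(n-1)\rfloor+1$. Define $\mathrm{WD}(x^\Lambda\partial_k)=\mathrm{wt}(\Lambda)-\deg(x^\Lambda)+n-k$ and $\mathrm{lev}_i(x^\Lambda\partial_k)=h_i\,\mathrm{WD}(x^\Lambda\partial_k)+\deg(x^\Lambda)-1$. For $i\ge-1$, $\mathcal{N}_i=\{b\in\mathcal{B}: \mathrm{lev}_j(b)\le j\text{ for some integer } -1\le j\le i\}$, and $\mathcal{L}_i=\mathcal{N}_i\setminus\mathcal{N}_{i-1}$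 for $i\ge0$. Let $a_m$ be the number of partitions of $m\ge0$ ($a_0=1$), $b_m=\sum_{j=0}^m a_j$, $c_m=\sum_{j=0}^m b_j$, with the convention $b_m=0$ for $m<0$. *)

From mathcomp Require Import all_boot all_order all_algebra.
Set Implicit Arguments. Unset Strict Implicit. Unset Printing Implicit Defensive.
Import Order.TTheory GRing.Theory Num.Theory.

(* An element x^Lambda d_k of B is encoded as the pair (k, lam) where
   lam = [:: lambda_1; ...; lambda_{k-1}] (Lambda in Part(k-1)). *)
Definition inB (n : nat) (b : nat * seq nat) : Prop :=
  (1 <= b.1 <= n)%N /\ size b.2 = b.1.-1.

Definition wt (lam : seq nat) : nat :=
  (\sum_(j < size lam) j.+1 * nth 0 lam j)%N.
Definition deg (lam : seq nat) : nat := sumn lam.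

(* r_i in {1..n-1} with i = r_i mod (n-1) *)
Definition rr (n : nat) (i : int) : nat :=
  (absz ((i - 1) %% (n.-1)%:Z)%Z).+1.
Definition hh (n : nat) (i : int) : int :=
  ((i - 1) %/ (n.-1)%:Z)%Z + 1.

Definition WD (n : nat) (b : nat * seq nat) : int :=
  (wt b.2)%:Z - (deg b.2)%:Z + n%:Z - (b.1)%:Z.

Definition lev (n : nat) (i : int) (b : nat * seq nat) : int :=
  hh n i * WD n b + (deg b.2)%:Z - 1.

Definition inN (n : nat) (i : int) (b : nat * seq nat) : Prop :=
  inB n b /\ exists j : int, (-1 <= j)%R /\ (j <= i)%R /\ (lev n j b <= j)%R.

Definition inL (n : nat) (i : int) (b : nat * seq nat) : Prop :=
  inN n i b /\ ~ inN n (i - 1) b.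

Definition card_is (T : eqType) (P : T -> Prop) (m : nat) : Prop :=
  exists s : seq T, uniq s /\ (forall x, P x <-> x \in s) /\ size s = m.

(* a_m = number of partitions of m: Lambda in Part(m) with each lambda_j <= m
   and wt Lambda = m (every partition of m is of this form). *)
Definition apart (m : nat) : nat :=
  #|[set f : {ffun 'I_m -> 'I_m.+1} | (\sum_(j < m) j.+1 * f j)%N == m]|.

Definition bpart (m : int) : nat :=
  match m with
  | Posz k => (\sum_(0 <= j < k.+1) apart j)%N
  | Negz _ => 0%N
  end.

Definition cpart (m : nat) : nat := (\sum_(0 <= j < m.+1) bpart j%:Z)%N.

(* Write j = (h_j - 1)(n - 1) + r_j with 1 <= r_j <= n - 1 and, for b = x^Λ ∂_k, put
   W = WD(b) and d = deg(x^Λ).  Then lev_j(b) <= j reads d - 1 <= j - h_j W, whose right-hand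
   side grows by one along each block of n - 1 consecutive j and changes by 1 - W from one
   block to the next.  Hence b lies in L_i exactly when d - 1 = i - h_i W and W < r_i.
   Splitting Λ = (λ_1, Λ') gives W = wt(Λ') + n - k, so for fixed k these conditions say
   e := wt(Λ') <= r_i + k - n - 1 and prescribe d.  When i > (n-4)(n-1) one has h_i >= n - 3,
   which makes the prescribed d at least e >= deg(Λ'); so λ_1 = d - deg(Λ') is determined and
   Λ' ranges over all partitions of e (they fit, as e <= k - 2).  Summing a_e over e gives
   b_{r_i+k-n-1}, and summing over k gives c_{r_i-1}. *)

From mathcomp Require Import all_boot all_order all_algebra zify.
Import Order.TTheory GRing.Theory Num.Theory.
Set Implicit Arguments. Unset Strict Implicit. Unset Printing Implicit Defensive.

Section CardIs.
Variable T : eqType.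

Lemma card_is_ext (P Q : T -> Prop) m :
  (forall x, P x <-> Q x) -> card_is P m -> card_is Q m.
Proof.
move=> PQ [s [us [Ps ss]]]; exists s; split=> //; split=> // x.
exact: iff_trans (iff_sym (PQ x)) (Ps x).
Qed.

Lemma card_is_inj_map (U : eqType) (P : U -> Prop) (g : U -> T) m :
  injective g -> card_is P m -> card_is (fun y => exists2 x, P x & y = g x) m.
Proof.
move=> g_inj [s [us [Ps ss]]]; exists (map g s); split; last split.
- by rewrite map_inj_uniq.
- move=> y; split=> [[x /Ps xs ->] | /mapP[x /Ps Px ->]]; last by exists x.
  exact: map_f.
- by rewrite size_map.
Qed.

Lemma card_is_sum (I : eqType) (s : seq I) (P : I -> T -> Prop) (c : I -> nat) :
  uniq s -> (forall t, t \in s -> card_is (P t) (c t)) ->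
  (forall t t' x, P t x -> P t' x -> t = t') ->
  card_is (fun x => exists2 t, t \in s & P t x) (\sum_(t <- s) c t).
Proof.
move=> + + disj; elim: s => [_ _ | t s IH /= /andP[ts us] cP].
  by exists [::]; split=> //; split=> [x|]; [split=> // -[] | rewrite big_nil].
have in_ts t' : t' \in s -> t' \in t :: s by rewrite inE => ->; rewrite orbT.
have [L [uL [PL sL]]] := cP t (mem_head t s).
have [L' [uL' [PL' sL']]] := IH us (fun t' ht' => cP t' (in_ts t' ht')).
exists (L ++ L'); split; last split.
- rewrite cat_uniq uL uL' andbT /=; apply/hasPn => x /PL' [t' t's Pt'x].
  by apply/negP => /PL Ptx; move: ts; rewrite (disj _ _ _ Ptx Pt'x) t's.
- move=> x; rewrite mem_cat; split.
  + case=> t'; rewrite inE => /orP[/eqP-> /PL -> // | t's Pt'x].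
    by apply/orP; right; apply/PL'; exists t'.
  + case/orP=> [/PL Ptx | /PL' [t' t's Pt'x]]; first by exists t; rewrite ?mem_head.
    by exists t'; rewrite ?in_ts.
- by rewrite size_cat sL sL' big_cons.
Qed.

End CardIs.

Lemma card_is_set (T : finType) (A : {set T}) : card_is (fun x => x \in A) #|A|.
Proof.
by exists (enum A); rewrite enum_uniq cardE; split=> //; split=> // x; rewrite mem_enum.
Qed.

Lemma deg_cons x t : deg (x :: t) = x + deg t.
Proof. by []. Qed.

Lemma wt_nil : wt [::] = 0.
Proof. by rewrite /wt big_ord0. Qed.

Lemma wt_cons x t : wt (x :: t) = x + wt t + deg t.
Proof.
rewrite /wt big_ord_recl /= mul1n -addnA; congr (_ + _).
rewrite /deg sumnE (big_nth 0) big_mkord -big_split /=.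
by apply: eq_bigr => j _; rewrite mulSn addnC.
Qed.

Lemma wt_behead lam : wt lam = deg lam + wt (behead lam).
Proof. by case: lam => [|x t]; [rewrite /= wt_nil | rewrite wt_cons deg_cons /=; lia]. Qed.

Lemma deg_le_wt t : deg t <= wt t.
Proof. by elim: t => [|x t IH]; rewrite ?wt_nil // wt_cons deg_cons; lia. Qed.

Lemma wt_le_size_deg t : wt t <= size t * deg t.
Proof.
elim: t => [|x t IH]; rewrite ?wt_nil // wt_cons deg_cons /= mulSn mulnDr; nia.
Qed.

Lemma wt_cat_nseq0 s m : wt (s ++ nseq m 0) = wt s.
Proof.
elim: s => [|x s IH]; last by rewrite cat_cons !wt_cons IH /deg sumn_cat sumn_nseq mul0n addn0.
rewrite /= wt_nil; elim: m => [|m IH]; first exact: wt_nil.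
by rewrite /= wt_cons IH /deg sumn_nseq.
Qed.

Lemma wt_nth_le t j : j.+1 * nth 0 t j <= wt t.
Proof.
case: (ltnP j (size t)) => [jt | tj]; last by rewrite nth_default ?muln0.
by rewrite /wt (bigD1 (Ordinal jt)) //= leq_addr.
Qed.

Lemma nth_ge_wt t j : wt t <= j -> nth 0 t j = 0.
Proof. by have := wt_nth_le t j; case: (nth 0 t j) => // a; rewrite mulnS; lia. Qed.

Section PartitionCount.
Variable e : nat.

Definition part_set := [set f : {ffun 'I_e -> 'I_e.+1} | \sum_(j < e) j.+1 * f j == e].

Definition seq_of_ffun (f : {ffun 'I_e -> 'I_e.+1}) : seq nat := [seq (f j : nat) | j <- enum 'I_e].

Lemma size_seq_of_ffun f : size (seq_of_ffun f) = e.
Proof. by rewrite size_map size_enum_ord. Qed.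

Lemma nth_seq_of_ffun f (j : 'I_e) : nth 0 (seq_of_ffun f) j = f j.
Proof. by rewrite (nth_map j) ?size_enum_ord // nth_ord_enum. Qed.

Lemma wt_seq_of_ffun f : wt (seq_of_ffun f) = \sum_(j < e) j.+1 * f j.
Proof.
by rewrite /wt size_seq_of_ffun; apply: eq_bigr => j _; rewrite nth_seq_of_ffun.
Qed.

Lemma card_seq_wt K : e <= K -> card_is (fun t => size t = K /\ wt t = e) (apart e).
Proof.
move=> eK; pose pad f := seq_of_ffun f ++ nseq (K - e) 0.
have size_pad f : size (pad f) = K by rewrite size_cat size_nseq size_seq_of_ffun; lia.
have wt_pad f : wt (pad f) = \sum_(j < e) j.+1 * f j.
  by rewrite wt_cat_nseq0 wt_seq_of_ffun.
have pad_inj : injective pad.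
  move=> f g /(congr1 (take e)); rewrite !take_size_cat ?size_seq_of_ffun // => fg.
  by apply/ffunP => j; apply: val_inj; rewrite /= -nth_seq_of_ffun fg nth_seq_of_ffun.
apply: card_is_ext (card_is_inj_map pad_inj (card_is_set (part_set))) => t; split.
  by case=> f; rewrite inE => /eqP wf ->; rewrite size_pad wt_pad.
case=> sz wtt; have nth_le j : nth 0 t j <= e.
  by rewrite -wtt; exact: leq_trans (leq_pmull _ _) (wt_nth_le t j).
pose f := [ffun j : 'I_e => inord (nth 0 t j) : 'I_e.+1].
have tE : t = pad f.
  apply: (@eq_from_nth _ 0) => [|j _]; first by rewrite size_pad.
  rewrite nth_cat size_seq_of_ffun; case: ltnP => [je | ej].
    by rewrite (nth_seq_of_ffun f (Ordinal je)) ffunE inordK // ltnS nth_le.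
  by rewrite nth_nseq if_same nth_ge_wt // wtt.
by exists f; rewrite // inE -wt_pad -tE wtt.
Qed.

End PartitionCount.

Local Open Scope ring_scope.

Lemma hh_rr_spec n j : (1 < n)%N ->
  j = (hh n j - 1) * (n.-1)%:Z + (rr n j)%:Z /\ (0 < rr n j <= n.-1)%N.
Proof.
move=> n1; have N_gt0 : 0 < (n.-1)%:Z by lia.
have := modz_ge0 (j - 1) (lt0r_neq0 N_gt0); have := ltz_pmod (j - 1) N_gt0.
have := divz_eq (j - 1) (n.-1)%:Z; rewrite /hh /rr.
by case: ((j - 1) %% _)%Z => // r; lia.
Qed.

Lemma hh_rr_unique n h r j : (1 < n)%N -> (0 < r <= n.-1)%N ->
  j = (h - 1) * (n.-1)%:Z + r%:Z -> hh n j = h /\ rr n j = r.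
Proof.
move=> n1 r_bd ->; have N_gt0 : 0 < (n.-1)%:Z by lia.
rewrite /hh /rr.
have -> : (h - 1) * (n.-1)%:Z + r%:Z - 1 = (h - 1) * (n.-1)%:Z + (r.-1)%:Z by lia.
rewrite divzMDl ?lt0r_neq0 // modzMDl divz_small ?modz_small; lia.
Qed.

Lemma hh_ge0 n i : (1 < n)%N -> 0 <= i -> 0 <= hh n i.
Proof. by move=> n1 i0; rewrite /hh -lerBlDr sub0r lez_divRL; lia. Qed.

Lemma hh_le n j i : j <= i -> hh n j <= hh n i.
Proof. by move=> ji; rewrite lerD2r lez_pdiv2r // lerD2r. Qed.

Lemma hh_lower_bound n i : (1 < n)%N ->
  (n%:Z - 4) * (n%:Z - 1) < i -> n%:Z - 3 <= hh n i.
Proof.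
move=> n1 i_lb; have [di /andP[_ rN]] := hh_rr_spec i n1.
rewrite leNgt; apply/negP => h_small.
have : 0 <= (n%:Z - 4 - hh n i) * (n.-1)%:Z by apply: mulr_ge0; lia.
lia.
Qed.

(* The hypothesis on [d = 1] is only used for [i = 0]: there no [j >= -1] lies in an
   earlier block, so nothing else bounds [W]. *)
Lemma first_level_hit n (W d i : int) :
  (2 < n)%N -> 0 <= i -> 0 <= W -> (d = 1 -> W < (n.-1)%:Z) ->
  (d - 1 <= i - hh n i * W /\ forall j, -1 <= j -> j < i -> j - hh n j * W < d - 1) <->
  (d - 1 = i - hh n i * W /\ W < (rr n i)%:Z).
Proof.
move=> n2 i0 W0 d1_W; have n1 : (1 < n)%N by lia.
have [di /andP[r_gt0 r_le]] := hh_rr_spec i n1; have h_ge0 := hh_ge0 n1 i0.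
split=> [[hit miss] | [hit W_lt_r]].
- (* Missing at the end i - r_i of the previous block (at -1 if h_i = 0) bounds W;
     missing at i - 1 gives the equality. *)
  have W_lt_r : W < (rr n i)%:Z.
    have [h_gt0 | h0] := ltrP 0 (hh n i).
      have [h_prev _] := @hh_rr_unique n (hh n i - 1) n.-1 (i - (rr n i)%:Z) n1
        ltac:(lia) ltac:(lia).
      have := miss (i - (rr n i)%:Z) ltac:(nia) ltac:(lia); rewrite h_prev; lia.
    have [h_last _] := @hh_rr_unique n 0 n.-2 (-1) n1 ltac:(lia) ltac:(lia).
    have := miss (-1) ltac:(lia) ltac:(lia); rewrite h_last => d_ge1.
    have hi0 : hh n i = 0 by lia.
    have -> : rr n i = n.-1 by move: di; rewrite hi0; lia.
    by apply: d1_W; move: hit; rewrite hi0; lia.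
  have same_level : hh n (i - 1) * W = hh n i * W.
    have [r1 | r_gt1] := leqP (rr n i) 1%N; first by rewrite (_ : W = 0) ?mulr0 //; lia.
    by have [-> _] := @hh_rr_unique n (hh n i) (rr n i).-1 (i - 1) n1 ltac:(lia) ltac:(lia).
  by have := miss (i - 1) ltac:(lia) ltac:(lia); rewrite same_level; lia.
- split; first lia.
  move=> j j_ge j_lt_i; have [dj /andP[_ rj_le]] := hh_rr_spec j n1.
  have [h_eq | h_lt] := eqVneq (hh n j) (hh n i); first by rewrite h_eq; lia.
  have h_lt' : hh n j < hh n i by rewrite lt_neqAle h_lt hh_le // ltW.
  have : 0 <= (hh n i - hh n j - 1) * ((n.-1)%:Z - W) by apply: mulr_ge0; lia.
  lia.
Qed.

Lemma lev_leE n (j : int) b : (lev n j b <= j) = ((deg b.2)%:Z - 1 <= j - hh n j * WD n b).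
Proof. by rewrite /lev; apply/idP/idP; lia. Qed.

Lemma inL_first n (i : int) b : 0 <= i ->
  inL n i b <-> [/\ inB n b, lev n i b <= i & forall j : int, -1 <= j -> j < i -> j < lev n j b].
Proof.
move=> i0; split=> [[[bB [j [j_ge [j_le hit]]]] not_prev] | [bB hit miss]].
  have ji : j = i.
    apply/eqP; rewrite eq_le j_le leNgt; apply/negP => j_lt.
    by apply: not_prev; split=> //; exists j; split=> //; split=> //; lia.
  split=> // [|j' j'_ge j'_lt]; first by rewrite -ji.
  rewrite ltNge; apply/negP => hit'; apply: not_prev; split=> //.
  by exists j'; split=> //; split=> //; lia.
split; first by split=> //; exists i; split; first lia.
case=> _ [j [j_ge [j_le hit']]]; have := miss j j_ge ltac:(lia); lia.
Qed.

Lemma WD_behead n k lam : WD n (k, lam) = (wt (behead lam))%:Z + n%:Z - k%:Z.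
Proof. by rewrite /WD /= wt_behead; lia. Qed.

Lemma inL_iff n (i : int) b : (2 < n)%N -> 0 <= i -> inB n b ->
  inL n i b <-> (deg b.2)%:Z - 1 = i - hh n i * WD n b /\ WD n b < (rr n i)%:Z.
Proof.
case: b => k lam n2 i0 bB.
have [/andP[k_gt0 k_le] size_lam] : (0 < k <= n)%N /\ size lam = k.-1 := bB.
have W_ge0 : 0 <= WD n (k, lam) by rewrite WD_behead; lia.
have deg1_W : (deg lam)%:Z = 1 -> WD n (k, lam) < (n.-1)%:Z.
  rewrite WD_behead; case: {W_ge0 bB} lam size_lam => [|x t] //= size_t deg1.
  have := wt_le_size_deg t; rewrite -/(deg t); nia.
rewrite inL_first // -(first_level_hit n2 i0 W_ge0 deg1_W) lev_leE.
split=> [[_ hit miss] | [hit miss]]; split=> // j j_ge j_lt.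
  by have := miss j j_ge j_lt; rewrite ltNge lev_leE -ltNge.
by rewrite ltNge lev_leE -ltNge; apply: miss.
Qed.

Lemma bpart_subn x y : bpart (x%:Z - y%:Z - 1) = (\sum_(0 <= e < x - y) apart e)%N.
Proof.
have [xy | yx] := leqP x y.
  by rewrite (_ : _ - 1 = Negz (y - x)) ?big_geq //; lia.
by rewrite (_ : _ - 1 = Posz (x - y).-1) /=; [rewrite prednK // subn_gt0 | lia].
Qed.

Lemma sum_bpart_shift n r : (r <= n)%N ->
  (\sum_(k <- iota 1 n) bpart ((r + k)%:Z - n%:Z - 1) = \sum_(0 <= j < r) bpart j)%N.
Proof.
move=> rn; have -> : iota 1 n = iota 1 (n - r) ++ iota (1 + (n - r)) r.
  by rewrite -iotaD subnK.
rewrite big_cat big1_seq ?add0n => [|k /andP[_]].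
  rewrite -[(1 + (n - r))%N]addn0 iotaDl big_map /index_iota subn0.
  apply: eq_bigr => j _; rewrite bpart_subn.
  by rewrite (_ : r + (1 + (n - r) + j) - n = j.+1)%N //; lia.
by rewrite mem_iota bpart_subn => /andP[_ k_lt]; rewrite big_geq //; lia.
Qed.

Lemma prescribed_deg_ge (N h r w : int) : 2 <= N -> N - 2 <= h -> 1 <= r <= N -> 0 <= w < r ->
  w <= 1 + (h - 1) * N + r - h * w.
Proof.
move=> N2 hN /andP[r1 rN] /andP[w0 wr].
have : 0 <= (h - N + 2) * (N - w) by apply: mulr_ge0; lia.
have : 0 <= (N - 2) * (N - r) by apply: mulr_ge0; lia.
have : 0 <= (N - 2) * (r - w - 1) by apply: mulr_ge0; lia.
lia.
Qed.

Section LevelCount.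
Variables (n : nat) (i : int).
Hypotheses (n_gt2 : (2 < n)%N) (i_ge0 : 0 <= i) (h_lb : n%:Z - 3 <= hh n i).

Lemma card_L_fiber k e : (0 < k <= n)%N -> (e < rr n i + k - n)%N ->
  card_is (fun b => [/\ inL n i b, b.1 = k & wt (behead b.2) = e]) (apart e).
Proof.
move=> /andP[k_gt0 k_le] e_lt; have n1 : (1 < n)%N by lia.
have [di /andP[r_gt0 r_le]] := hh_rr_spec i n1.
pose D := absz (1 + i - hh n i * (e%:Z + n%:Z - k%:Z))%R.
have D_ge_e : e%:Z <= 1 + i - hh n i * (e%:Z + n%:Z - k%:Z).
  have := @prescribed_deg_ge (n.-1)%:Z (hh n i) (rr n i)%:Z (e%:Z + n%:Z - k%:Z)
    ltac:(lia) ltac:(lia) ltac:(lia) ltac:(lia).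
  lia.
have DE : D%:Z = 1 + i - hh n i * (e%:Z + n%:Z - k%:Z) by rewrite /D; lia.
have head_inj : injective (fun t => (k, (D - deg t)%N :: t)) by move=> t t' [].
apply: card_is_ext (card_is_inj_map head_inj (@card_seq_wt e k.-2 ltac:(lia))).
move=> [k' lam]; split=> [[t [size_t wt_t] [-> ->]] | [L_lam /= k_eq wt_lam]].
  have deg_t := deg_le_wt t.
  have bB : inB n (k, (D - deg t)%N :: t).
    by split=> /=; [apply/andP | rewrite size_t; lia].
  split=> //; apply/(inL_iff n_gt2 i_ge0 bB); rewrite WD_behead /= wt_t.
  rewrite subnK; lia.
subst k'; have bB := L_lam.1.1; have [_ /= size_lam] := bB.
move/(inL_iff n_gt2 i_ge0 bB): L_lam; rewrite WD_behead /= wt_lam => -[deg_lam _].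
case: {bB} lam size_lam wt_lam deg_lam => [|x t] /= size_t wt_t deg_xt.
  by exfalso; lia.
by exists t; [split; lia | congr (_, _ :: _); lia].
Qed.

Lemma card_L_k k : (0 < k <= n)%N ->
  card_is (fun b => inL n i b /\ b.1 = k) (bpart ((rr n i + k)%:Z - n%:Z - 1)).
Proof.
move=> k_bd; rewrite bpart_subn /index_iota subn0.
pose fiber e b := [/\ inL n i b, b.1 = k & wt (behead b.2) = e].
have card_fiber e : e \in iota 0 (rr n i + k - n) -> card_is (fiber e) (apart e).
  by rewrite mem_iota => /andP[_ e_lt]; apply: card_L_fiber.
apply: card_is_ext (card_is_sum (iota_uniq _ _) card_fiber _).
  move=> b; split=> [[e _ []] // | [L_b b_k]]; exists (wt (behead b.2)) => //.
  have bB := L_b.1.1; move/(inL_iff n_gt2 i_ge0 bB): L_b => -[_].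
  by case: b bB b_k => k' lam /= _ ->; rewrite WD_behead mem_iota; lia.
by move=> e e' b [_ _ <-] [_ _ <-].
Qed.

Lemma card_L : card_is (inL n i) (cpart (rr n i).-1).
Proof.
have [_ /andP[r_gt0 r_le]] := hh_rr_spec i (ltnW n_gt2).
rewrite /cpart prednK // -(@sum_bpart_shift n (rr n i)); last lia.
have card_k k : k \in iota 1 n ->
    card_is (fun b => inL n i b /\ b.1 = k) (bpart ((rr n i + k)%:Z - n%:Z - 1)).
  by rewrite mem_iota => k_bd; apply: card_L_k; lia.
apply: card_is_ext (card_is_sum (iota_uniq _ _) card_k _).
  move=> [k lam]; split=> [[k' _ []] // | L_b]; exists k; last by [].
  by have [/andP[k_gt0 k_le] _] := L_b.1.1; rewrite mem_iota /= in k_gt0 k_le *; lia.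
by move=> k k' b [_ <-] [_ <-].
Qed.

End LevelCount.

Theorem corollary2p16 (n : nat) (i : int) (k : nat) :
  (3 <= n)%N -> (0 <= i)%R ->
  ((n%:Z - 4) * (n%:Z - 1) < i)%R ->
  (1 <= k <= n)%N ->
  card_is (fun b => inL n i b /\ b.1 = k)
          (bpart ((rr n i + k)%:Z - n%:Z - 1)%R)
  /\ card_is (inL n i) (cpart (rr n i).-1).
Proof.
move=> n_gt2 i_ge0 i_lb k_bd.
have h_lb := hh_lower_bound (ltnW n_gt2) i_lb.
by split; [apply: card_L_k | apply: card_L].
Qed.
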